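(* An LR triple is uniquely determined up to isomorphism by its parameter array and trace data. That is, if $A,B,C$ on $V$ and $A',B',C'$ on $V'$ are LR triples over $\mathbb F$ of the same diameter with the same parameter array and the same trace data, then they are isomorphic.
   Context: Let $V$ be a vector space over a field $\mathbb F$ with $\dim V=d+1$. A decomposition of $V$ is a sequence $(V_i)_{i=0}^d$ of one-dimensional subspaces with $V=\bigoplus V_i$; $X$ lowers it if $XV_i=V_{i-1}$ ($1\le i\le d$), $XV_0=0$; raises it if $XV_i=V_{i+1}$ ($0\le i\le d-1$), $XV_d=0$. An ordered pair $X,Y\in\mathrm{End}(V)$ is an LR pair if some decomposition (unique, the $(X,Y)$-decomposition) is lowered by $X$ and raised by $Y$; for $1\le i\le d$ the $i$-th component is invariant under $YX$ with nonzero eigenvalue, giving the parameter sequence. An LR triple on $V$ is $A,B,C\in\mathrm{End}(V)$ with $A,B$; $B,C$; $C,A$ all LR pairs. Its parameter array is $(\{\varphi_i\};\{\varphi'_i\};\{\varphi''_i\})$, the parameter sequences of $A,B$; $B,C$; $C,A$. Let $E_i,E'_i,E''_i$ ($0\le i\le d$) be the projections onto the $i$-th components of the $(A,B)$-, $(B,C)$-, $(C,A)$-decompositions respectively (along the other components). The trace data is $(\{a_i\};\{a'_i\};\{a''_i\})$ with $a_i=\mathrm{tr}(CE_i)$, $a'_i=\mathrm{tr}(AE'_i)$, $a''_i=\mathrm{tr}(BE''_i)$. LR triples are isomorphic if some linear bijection $\sigma:V\to V'$ satisfies $\sigma A=A'\sigma$, $\sigma B=B'\sigma$, $\sigma C=C'\sigma$.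 *)

From HB Require Import structures.
From mathcomp Require Import all_boot all_order all_algebra.
Set Implicit Arguments. Unset Strict Implicit. Unset Printing Implicit Defensive.
Import GRing.Theory.
Local Open Scope ring_scope.

(* Conventions: V = row vectors 'rV[F]_(d.+1); an endomorphism X of V is a
   matrix acting on the right (v |-> v *m X); a subspace of V is the row
   space of a square matrix (mxalgebra, scope %MS).  Hence the composite
   "Y X" (first X, then Y) is the matrix X *m Y.  A decomposition
   (V_i)_{i=0}^d is a function Vs : nat -> 'M_(d.+1) whose values for
   i <= d are the components. *)

Section LR.
Variables (F : fieldType) (d : nat).
Local Notation M := 'M[F]_(d.+1).

Definition is_decomp (Vs : nat -> M) : Prop :=
  [/\ forall i, (i <= d)%N -> \rank (Vs i) = 1%N,
      mxdirect (\sum_(i < d.+1) Vs i)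
    & (\sum_(i < d.+1) Vs i == 1%:M)%MS].

Definition lowers (X : M) (Vs : nat -> M) : Prop :=
  (forall i, (1 <= i <= d)%N -> (Vs i *m X == Vs i.-1)%MS) /\
  (Vs 0%N *m X == (0 : M))%MS.

Definition raises (Y : M) (Vs : nat -> M) : Prop :=
  (forall i, (i < d)%N -> (Vs i *m Y == Vs i.+1)%MS) /\
  (Vs d *m Y == (0 : M))%MS.

Definition LR_pair (X Y : M) : Prop :=
  exists Vs, [/\ is_decomp Vs, lowers X Vs & raises Y Vs].

Definition LR_triple (A B C : M) : Prop :=
  [/\ LR_pair A B, LR_pair B C & LR_pair C A].

Definition comp_proj (Vs : nat -> M) (i : nat) : M :=
  proj_mx (Vs i) (\sum_(j < d.+1 | nat_of_ord j != i) Vs j)%MS.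

(* pair_data X Y Z phi a : the (X,Y)-decomposition Vs has parameter
   sequence phi (V_i is YX-invariant with eigenvalue phi i, 1 <= i <= d),
   and a i = tr(Z E_i) for the projections E_i onto its components
   (0 <= i <= d).  Since the (X,Y)-decomposition is unique, the existential
   just names it. *)
Definition pair_data (X Y Z : M) (phi a : nat -> F) : Prop :=
  exists Vs, [/\ is_decomp Vs, lowers X Vs, raises Y Vs,
    (forall i, (1 <= i <= d)%N -> Vs i *m (X *m Y) = phi i *: Vs i)
  & (forall i, (i <= d)%N -> \tr (comp_proj Vs i *m Z) = a i)].

Definition triple_data (A B C : M) (phi phi' phi'' a a' a'' : nat -> F) : Prop :=
  [/\ pair_data A B C phi a, pair_data B C A phi' a' & pair_data C A B phi'' a''].

Definition LR_iso (A B C A' B' C' : M) : Prop :=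
  exists2 S : M, S \in unitmx &
    [/\ A *m S = S *m A', B *m S = S *m B' & C *m S = S *m C'].

End LR.

(** Let [p_0, ..., p_d] be a basis of V raised by B and lowered by A, normalised
    by [p_l = p_0 B^l], so that [p_l A = phi_l p_(l-1)].  The span of
    [p_k, ..., p_d] is the image of [B^k], and the span of [p_0, ..., p_(k-1)]
    is the image of [A^(d+1-k)].  These images are also flags of the
    (B,C)- and (C,A)-decompositions, on whose successive quotients BC and CA act
    by the scalars [phi'] and [phi''].  Reading this off in the basis [p] shows
    that C is tridiagonal, with subdiagonal given by [phi'], superdiagonal by
    [phi''] and [phi], and diagonal by the trace data [a].  Hence every triple
    with the given parameter array and trace data is conjugate to the same
    triple of matrices. *)
From HB Require Import structures.
From mathcomp Require Import all_boot all_order all_algebra zify.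
Set Implicit Arguments. Unset Strict Implicit. Unset Printing Implicit Defensive.
Import GRing.Theory.
Local Open Scope ring_scope.

Lemma rank1_eqmx_rV (F : fieldType) (m n : nat) (M : 'M[F]_(m, n)) :
  \rank M = 1%N -> exists v : 'rV[F]_n, (M :=: v)%MS.
Proof.
move=> rkM; case: (pickP (fun i => row i M != 0)) => [i Mi_neq0 | M_rows0].
  exists (row i M); apply/eqmx_sym/eqmxP.
  by rewrite -(mxrank_leqif_eq (row_sub i M)).2 rank_rV Mi_neq0 rkM.
suff M0 : M = 0 by move: rkM; rewrite M0 mxrank0.
by apply/row_matrixP=> i; rewrite row0; move: (M_rows0 i) => /= /negbFE/eqP.
Qed.

Lemma submx_shift (F : fieldType) (m n k : nat) (y : 'rV[F]_n)
    (G : 'M[F]_(m, n)) (X : 'M[F]_n) (H : 'M[F]_(k, n)) (c : F) :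
  (y <= G)%MS -> (G *m X - c *: G <= H)%MS -> (y *m X - c *: y <= H)%MS.
Proof.
case/submxP=> w -> GXH; rewrite -mulmxA scalemxAr -mulmxBr.
exact: submx_trans (submxMl w _) GXH.
Qed.

Lemma sum_delta (V : nmodType) (n : nat) (f : 'I_n -> V) (j0 : 'I_n) :
  (forall j, j != j0 -> f j = 0) -> \sum_j f j = f j0.
Proof. by move=> f0; rewrite (bigD1 j0) //= big1 ?addr0 // => j /f0. Qed.

Section Bases.
Variables (F : fieldType) (d : nat).
Implicit Types (p : nat -> 'rV[F]_(d.+1)) (s : pred nat) (X Y : 'M[F]_(d.+1)) (phi : nat -> F).

Definition basis_mx p : 'M[F]_(d.+1) := \matrix_(l < d.+1) p l.

Definition span_sel p (s : pred nat) : 'M[F]_(d.+1) :=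
  \matrix_(l < d.+1) (if s l then p l else 0).
Definition span_ge p k := span_sel p (leq k).
Definition span_lt p k := span_sel p [pred l | l < k]%N.

Definition raising_basis p Y :=
  (forall l, (l < d)%N -> p l *m Y = p l.+1) /\ p d *m Y = 0.
Definition lowering_basis p X phi :=
  (forall l, (0 < l <= d)%N -> p l *m X = phi l *: p l.-1) /\ p 0%N *m X = 0.

Definition raise_mx : 'M[F]_(d.+1) := \matrix_(i, j) (j == i.+1 :> nat)%:R.
Definition lower_mx phi : 'M[F]_(d.+1) :=
  \matrix_(i, j) (if i == j.+1 :> nat then phi i else 0).

Lemma span_ge0 p : span_ge p 0 = basis_mx p.
Proof. by apply/row_matrixP=> l; rewrite !rowK. Qed.

Lemma span_lt_full p : span_lt p d.+1 = basis_mx p.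
Proof. by apply/row_matrixP=> l; rewrite !rowK /= ltn_ord. Qed.

Lemma mem_span_sel p s l : s l -> (l < d.+1)%N -> (p l <= span_sel p s)%MS.
Proof.
move=> sl ld; have -> : p l = row (Ordinal ld) (span_sel p s) by rewrite rowK /= sl.
exact: row_sub.
Qed.

Lemma span_sel_diag p s :
  span_sel p s = diag_mx (\row_l (if s l then 1 else 0)) *m basis_mx p.
Proof.
by apply/matrixP=> l j; rewrite mul_diag_mx !mxE; case: (s l); rewrite ?mul1r ?mul0r ?mxE.
Qed.

Lemma coord_span_sel p s (z : 'rV[F]_(d.+1)) (k : 'I_d.+1) :
  basis_mx p \in unitmx -> (z <= span_sel p s)%MS -> ~~ s k ->
  (z *m invmx (basis_mx p)) 0 k = 0.
Proof.
move=> p_unit /submxP [w ->] not_sk.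
by rewrite span_sel_diag mulmxA mulmxK // mul_mx_diag !mxE (negbTE not_sk) mulr0.
Qed.

Lemma coord_basis p (l : 'I_d.+1) :
  basis_mx p \in unitmx -> p l *m invmx (basis_mx p) = delta_mx 0 l.
Proof.
by move=> p_unit; rewrite -[p l](rowK (fun l : 'I_d.+1 => p l)) -row_mul mulmxV // row1.
Qed.

Lemma span_sel_shift p s (M : 'M[F]_(d.+1)) (c : F) k (H : 'M[F]_(k, d.+1)) :
  (forall l, (l < d.+1)%N -> s l -> (p l *m M - c *: p l <= H)%MS) ->
  (span_sel p s *m M - c *: span_sel p s <= H)%MS.
Proof.
move=> shift_rows; apply/row_subP=> l; rewrite linearB linearZ /= row_mul rowK.
by case: ifP=> sl; [exact: shift_rows | rewrite mul0mx scaler0 subr0 sub0mx].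
Qed.

Lemma mulmx_basis_mx p (u : 'rV[F]_(d.+1)) : u *m basis_mx p = \sum_j u 0 j *: p j.
Proof. by rewrite mulmx_sum_row; apply: eq_bigr => j _; rewrite rowK. Qed.

Section Raising.
Variables (p : nat -> 'rV[F]_(d.+1)) (Y : 'M[F]_(d.+1)).
Hypotheses (p_unit : basis_mx p \in unitmx) (pY : raising_basis p Y).

Lemma raising_basis_pow k m : (m + k <= d)%N -> p (m + k)%N = p m *m Y ^+ k.
Proof.
elim: k m => [|k IHk] m mk; first by rewrite addn0 expr0 mulmx1.
have mk_lt : (m + k < d)%N by rewrite -addnS.
by rewrite addnS -(pY.1 _ mk_lt) (IHk m (ltnW mk_lt)) exprSr -mulmxA.
Qed.

Lemma span_ge_mul k : (span_ge p k *m Y <= span_ge p k.+1)%MS.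
Proof.
apply/row_subP=> l; rewrite row_mul rowK.
case: ifP=> kl; last by rewrite mul0mx sub0mx.
have [ld|ld] := ltnP l d; first by rewrite pY.1 // mem_span_sel.
have -> : nat_of_ord l = d by have := ltn_ord l; lia.
by rewrite pY.2 sub0mx.
Qed.

Lemma span_ge_pow k : (span_ge p k :=: Y ^+ k)%MS.
Proof.
apply/eqmxP/andP; split.
  apply/row_subP=> l; rewrite rowK; case: ifP=> kl; last by rewrite sub0mx.
  have -> : nat_of_ord l = ((l - k) + k)%N by rewrite subnK.
  by rewrite raising_basis_pow ?submxMl // subnK // -ltnS.
elim: k => [|k IHk]; first by rewrite expr0 span_ge0 sub1mx row_full_unit.
by rewrite exprSr (submx_trans (submxMr Y IHk)) ?span_ge_mul.
Qed.

Lemma basis_mx_raising : basis_mx p *m Y = raise_mx *m basis_mx p.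
Proof.
apply/row_matrixP=> l; rewrite !row_mul rowK mulmx_basis_mx.
have [ld|ld] := ltnP l d.
  rewrite (@sum_delta _ _ _ (Ordinal (ld : (l.+1 < d.+1)%N))) /=.
    by rewrite !mxE eqxx scale1r pY.1.
  move=> j j_neq; rewrite !mxE; case: eqP => [j_eq|]; last by rewrite scale0r.
  by case/eqP: j_neq; apply: val_inj.
have -> : nat_of_ord l = d by have := ltn_ord l; lia.
rewrite pY.2 big1 // => j _; rewrite !mxE; case: eqP => [|]; last by rewrite scale0r.
by have := ltn_ord j; lia.
Qed.

End Raising.

Section Lowering.
Variables (p : nat -> 'rV[F]_(d.+1)) (X : 'M[F]_(d.+1)) (phi : nat -> F).
Hypothesis pX : lowering_basis p X phi.

Lemma span_lt_mul k : (span_lt p k *m X <= span_lt p k.-1)%MS.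
Proof.
apply/row_subP=> l; rewrite row_mul rowK.
case: ifP=> /= lk; last by rewrite mul0mx sub0mx.
have [->|l_gt0] := posnP l; first by rewrite pX.2 sub0mx.
rewrite pX.1; last by have := ltn_ord l; lia.
by rewrite scalemx_sub // mem_span_sel //=; have := ltn_ord l; lia.
Qed.

Lemma span_lt_pow :
  basis_mx p \in unitmx -> (forall l, (0 < l <= d)%N -> phi l != 0) ->
  forall k, (span_lt p (d.+1 - k) :=: X ^+ k)%MS.
Proof.
move=> p_unit phi_neq0 k; apply/eqmxP/andP; split; last first.
  elim: k => [|k IHk]; first by rewrite expr0 subn0 span_lt_full sub1mx row_full_unit.
  by rewrite exprSr subnS (submx_trans (submxMr X IHk)) ?span_lt_mul.
elim: k => [|k IHk]; first by rewrite submx1.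
apply/row_subP=> l; rewrite rowK; case: ifP=> /= lk; last by rewrite sub0mx.
have l1_pos : (0 < l.+1 <= d)%N by lia.
have -> : p l = (phi l.+1)^-1 *: (p l.+1 *m X).
  by rewrite pX.1 // scalerA mulVf ?phi_neq0 // scale1r.
rewrite scalemx_sub // exprSr submxMr // (submx_trans _ IHk) // mem_span_sel //=; lia.
Qed.

Lemma basis_mx_lowering : basis_mx p *m X = lower_mx phi *m basis_mx p.
Proof.
apply/row_matrixP=> l; rewrite !row_mul rowK mulmx_basis_mx.
have [l0|l_gt0] := posnP l.
  by rewrite l0 pX.2 big1 // => j _; rewrite !mxE l0 scale0r.
have l1_lt : (l.-1 < d.+1)%N by have := ltn_ord l; lia.
rewrite (@sum_delta _ _ _ (Ordinal l1_lt)) /=.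
  by rewrite !mxE prednK // eqxx pX.1 //; have := ltn_ord l; lia.
move=> j j_neq; rewrite !mxE; case: eqP => [j_eq|]; last by rewrite scale0r.
by case/eqP: j_neq; apply: val_inj => /=; rewrite j_eq.
Qed.

End Lowering.

Section LoweringRaising.
Variables (p : nat -> 'rV[F]_(d.+1)) (X Y : 'M[F]_(d.+1)) (phi : nat -> F).
Hypotheses (pX : lowering_basis p X phi) (pY : raising_basis p Y).

Lemma lowering_raising_eigen l : (0 < l <= d)%N -> p l *m (X *m Y) = phi l *: p l.
Proof.
move=> l_range; rewrite mulmxA pX.1 // -scalemxAl pY.1; last by lia.
by rewrite prednK //; case/andP: l_range.
Qed.

Lemma span_lt_shift j : (0 < j)%N ->
  (span_lt p j.+1 *m (X *m Y) - phi j *: span_lt p j.+1 <= span_lt p j)%MS.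
Proof.
move=> j_gt0; apply: span_sel_shift => l ld /= lj.
have [->|l_gt0] := posnP l.
  by rewrite mulmxA pX.2 mul0mx sub0r -scaleNr scalemx_sub // mem_span_sel.
rewrite lowering_raising_eigen; last by lia.
rewrite -scalerBl; have [->|l_neq_j] := eqVneq l j; first by rewrite subrr scale0r sub0mx.
by rewrite scalemx_sub // mem_span_sel //=; lia.
Qed.

Lemma span_ge_shift k : (0 < k)%N ->
  (span_ge p k *m (X *m Y) - phi k *: span_ge p k <= span_ge p k.+1)%MS.
Proof.
move=> k_gt0; apply: span_sel_shift => l ld /= kl.
rewrite lowering_raising_eigen; last by lia.
rewrite -scalerBl; have [->|l_neq_k] := eqVneq l k; first by rewrite subrr scale0r sub0mx.
by rewrite scalemx_sub // mem_span_sel //=; lia.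
Qed.

End LoweringRaising.
End Bases.

Section Decomposition.
Variables (F : fieldType) (d : nat) (Vs : nat -> 'M[F]_(d.+1)).
Hypothesis Vs_decomp : is_decomp Vs.

Lemma decomp_raising_basis Y : raises Y Vs ->
  exists p : nat -> 'rV[F]_(d.+1), [/\ forall l, (l <= d)%N -> (Vs l :=: p l)%MS,
    raising_basis p Y & basis_mx p \in unitmx].
Proof.
case: Vs_decomp => Vs_rank _ Vs_full [VsY VsdY].
have [p0 Vs0_p0] := rank1_eqmx_rV (Vs_rank 0%N (leq0n d)).
pose p l := p0 *m Y ^+ l.
have Vs_p l : (l <= d)%N -> (Vs l :=: p l)%MS.
  elim: l => [|l IHl] ld; first by rewrite /p expr0 mulmx1.
  apply: eqmx_trans (eqmx_sym (eqmxP (VsY l ld))) _.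
  by rewrite /p exprSr mulmxA; apply: eqmxMr; exact: IHl (ltnW ld).
exists p; split=> //.
  split=> [l _|]; first by rewrite /p exprSr mulmxA.
  apply/eqP; rewrite -submx0 (eqmxMr Y (eqmx_sym (Vs_p d (leqnn d)))).
  by case/andP: VsdY.
rewrite -row_full_unit -sub1mx; case/andP: Vs_full => _ one_sub.
apply: submx_trans one_sub _; apply/sumsmx_subP => i _.
have id : (i <= d)%N by rewrite -ltnS.
by rewrite (Vs_p i id) -[p i](rowK (fun l : 'I_d.+1 => p l)) row_sub.
Qed.

Section DecompositionBasis.
Variable p : nat -> 'rV[F]_(d.+1).
Hypothesis Vs_p : forall l, (l <= d)%N -> (Vs l :=: p l)%MS.

Lemma decomp_basis_neq0 l : (l <= d)%N -> p l != 0.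
Proof.
move=> ld; have [Vs_rank _ _] := Vs_decomp.
by have := Vs_rank l ld; rewrite (Vs_p ld) rank_rV; case: (p l != 0).
Qed.

Lemma decomp_lowering_basis X Y phi :
  raising_basis p Y -> lowers X Vs ->
  (forall l, (1 <= l <= d)%N -> Vs l *m (X *m Y) = phi l *: Vs l) ->
  lowering_basis p X phi /\ (forall l, (0 < l <= d)%N -> phi l != 0).
Proof.
move=> pY [VsX Vs0X] Vs_eigen.
have p_eigen l : (0 < l <= d)%N -> p l *m (X *m Y) = phi l *: p l.
  move=> l_range; have /andP [_ ld] := l_range.
  have /submxP [w ->] : (p l <= Vs l)%MS by rewrite (Vs_p ld).
  by rewrite -mulmxA Vs_eigen // scalemxAr.
have pX l : (0 < l <= d)%N -> p l *m X = phi l *: p l.-1.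
  move=> l_range; have /andP [l_gt0 ld] := l_range.
  have /sub_rVP [c pXc] : (p l *m X <= p l.-1)%MS.
    rewrite -(Vs_p (leq_trans (leq_pred l) ld)) -(eqmxMr X (Vs_p ld)).
    by case/andP: (VsX l l_range).
  have : (phi l - c) *: p l = 0.
    by rewrite scalerBl -p_eigen // mulmxA pXc -scalemxAl pY.1 ?prednK ?subrr //; lia.
  by move/eqP; rewrite scaler_eq0 (negbTE (decomp_basis_neq0 ld)) orbF subr_eq0 pXc => /eqP ->.
split; first split=> //.
  apply/eqP; rewrite -submx0 -(eqmxMr X (Vs_p (leq0n d))).
  by case/andP: Vs0X.
move=> l l_range; have /andP [_ ld] := l_range.
apply/eqP=> phi0; have [Vs_rank _ _] := Vs_decomp.
have := Vs_rank l.-1 (leq_trans (leq_pred l) ld).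
rewrite -(eqmx_rank (VsX l l_range)) (eqmxMr X (Vs_p ld)).
by rewrite pX // phi0 scale0r mxrank0.
Qed.

Lemma comp_proj_basis (i : 'I_d.+1) : basis_mx p \in unitmx ->
  comp_proj Vs i = invmx (basis_mx p) *m delta_mx i i *m basis_mx p.
Proof.
move=> p_unit; have [_ Vs_direct _] := Vs_decomp.
have Vs_p_sub (l : 'I_d.+1) : (p l <= Vs l)%MS by rewrite Vs_p // -ltnS.
have Vs_cap_others : (Vs i :&: \sum_(j < d.+1 | nat_of_ord j != i) Vs j)%MS = 0.
  have <- : (\sum_(j < d.+1 | true && (j != i)) Vs j)%MS =
            (\sum_(j < d.+1 | nat_of_ord j != i) Vs j)%MS by apply: eq_bigl.
  exact: (mxdirect_sumsP Vs_direct) i isT.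
suff E : basis_mx p *m comp_proj Vs i = delta_mx i i *m basis_mx p.
  by rewrite -mulmxA -E mulKmx.
apply/row_matrixP => l; rewrite !row_mul rowK rowE mul_delta_mx_cond /comp_proj.
case: eqP => [->|l_neq_i].
  by rewrite mulr1n proj_mx_id ?Vs_p_sub // -[p i](rowK (fun l : 'I_d.+1 => p l)) rowE.
rewrite mulr0n mul0mx proj_mx_0 // (sumsmx_sup l) //.
by apply/eqP => l_eq_i; apply: l_neq_i; apply: val_inj.
Qed.

End DecompositionBasis.
End Decomposition.

Lemma mxtrace_conj_delta (R : comUnitRingType) (n : nat) (P Z : 'M[R]_n) (i : 'I_n) :
  \tr (invmx P *m delta_mx i i *m P *m Z) = (P *m Z *m invmx P) i i.
Proof.
rewrite -!mulmxA mxtrace_mulC -!mulmxA.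
rewrite -(mul_delta_mx (0 : 'I_1)) -mulmxA mxtrace_mulC trace_mx11.
by rewrite -!mulmxA -rowE !mulmxA -colE !mxE.
Qed.

Lemma pair_data_basis (F : fieldType) (d : nat) (X Y Z : 'M[F]_(d.+1)) (phi a : nat -> F) :
  pair_data X Y Z phi a ->
  exists p : nat -> 'rV[F]_(d.+1),
    [/\ basis_mx p \in unitmx, raising_basis p Y, lowering_basis p X phi,
        forall l, (0 < l <= d)%N -> phi l != 0
      & forall i : 'I_d.+1, (basis_mx p *m Z *m invmx (basis_mx p)) i i = a i].
Proof.
case=> Vs [Vs_decomp VsX VsY Vs_eigen Vs_trace].
have [p [Vs_p pY p_unit]] := decomp_raising_basis Vs_decomp VsY.
have [pX phi_neq0] := decomp_lowering_basis Vs_decomp Vs_p pY VsX Vs_eigen.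
exists p; split=> // i.
by rewrite -mxtrace_conj_delta -(comp_proj_basis Vs_decomp Vs_p i p_unit) Vs_trace // -ltnS.
Qed.

Definition tridiag_normal_mx (F : fieldType) (d : nat) (phi phi' phi'' a : nat -> F) :
    'M[F]_(d.+1) :=
  \matrix_(i, j) (if j.+1 == i :> nat then phi' (d - i)%N.+1
                  else if i == j :> nat then a i
                  else if j == i.+1 :> nat then phi'' (d - i)%N / phi j
                  else 0).

Lemma row_mul_lower_mx (F : fieldType) (d : nat) (phi : nat -> F) (u : 'rV[F]_(d.+1))
    (k l : 'I_d.+1) :
  l = k.+1 :> nat -> (u *m lower_mx d phi) 0 k = u 0 l * phi l.
Proof.
move=> lk; rewrite mxE (sum_delta (j0 := l)) ?mxE ?lk ?eqxx // => m m_neq_l.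
rewrite mxE; case: eqP => [mk|]; last by rewrite mulr0.
by case/eqP: m_neq_l; apply: val_inj; rewrite /= mk lk.
Qed.

Section NormalForm.
Variables (F : fieldType) (d : nat) (A B C : 'M[F]_(d.+1)) (phi phi' phi'' : nat -> F).
Variables (p q r : nat -> 'rV[F]_(d.+1)).
Hypotheses (p_unit : basis_mx p \in unitmx) (q_unit : basis_mx q \in unitmx)
  (r_unit : basis_mx r \in unitmx).
Hypotheses (pA : lowering_basis p A phi) (pB : raising_basis p B)
  (qB : lowering_basis q B phi') (qC : raising_basis q C)
  (rC : lowering_basis r C phi'') (rA : raising_basis r A).
Hypotheses (phi_neq0 : forall l, (0 < l <= d)%N -> phi l != 0)
  (phi'_neq0 : forall l, (0 < l <= d)%N -> phi' l != 0).

Local Notation P := (basis_mx p).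

Lemma C_basis_mod_span_ge i : (0 < i <= d)%N ->
  (p i *m C - phi' (d - i)%N.+1 *: p i.-1 <= span_ge p i)%MS.
Proof.
move=> i_range; have pi1_lt : (i.-1 < d.+1)%N by lia.
have -> : p i *m C = p i.-1 *m (B *m C) by rewrite mulmxA pB.1 ?prednK //; lia.
have pi1_span : (p i.-1 <= span_lt q (d - i).+2)%MS.
  rewrite (_ : (d - i).+2 = d.+1 - i.-1)%N; last by lia.
  by rewrite (span_lt_pow qB q_unit phi'_neq0) -(span_ge_pow p_unit pB) mem_span_sel.
apply: submx_trans (submx_shift pi1_span (span_lt_shift qB qC (ltn0Sn (d - i)))) _.
rewrite (_ : (d - i).+1 = d.+1 - i)%N; last by lia.
by rewrite (span_lt_pow qB q_unit phi'_neq0) -(span_ge_pow p_unit pB).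
Qed.

Lemma CA_basis_mod_span_lt i : (i < d)%N ->
  (p i *m C *m A - phi'' (d - i)%N *: p i <= span_lt p i)%MS.
Proof.
move=> id; have pi_span : (p i <= span_ge r (d - i))%MS.
  rewrite (span_ge_pow r_unit rA) -(span_lt_pow pA p_unit phi_neq0).
  by rewrite mem_span_sel //=; lia.
rewrite -mulmxA; apply: submx_trans (submx_shift pi_span (span_ge_shift rC rA _)) _.
  by rewrite subn_gt0.
rewrite (span_ge_pow r_unit rA) -(span_lt_pow pA p_unit phi_neq0).
by rewrite (_ : d.+1 - (d - i).+1 = i)%N //; lia.
Qed.

Local Notation N := (P *m C *m invmx P).

Lemma conj_entry (i k : 'I_d.+1) : N i k = (p i *m C *m invmx P) 0 k.
Proof.
have -> : N i k = row i N 0 k by rewrite !mxE.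
by rewrite !row_mul rowK.
Qed.

Lemma conj_C_below (i k : 'I_d.+1) : (k < i)%N ->
  N i k = if k.+1 == i :> nat then phi' (d - i)%N.+1 else 0.
Proof.
move=> ki; have i_range : (0 < i <= d)%N by have := ltn_ord i; lia.
have i1_lt : (i.-1 < d.+1)%N by lia.
have := coord_span_sel p_unit (C_basis_mod_span_ge i_range) (k := k).
rewrite /= -ltnNge => /(_ ki).
rewrite mulmxBl -scalemxAl -[p i.-1]/(p (Ordinal i1_lt)) coord_basis //.
rewrite conj_entry => /eqP; rewrite !mxE subr_eq0 => /eqP ->.
have -> : (k == Ordinal i1_lt) = (k.+1 == i :> nat) by rewrite -val_eqE /=; apply/eqP/eqP; lia.
by rewrite eqxx /=; case: (k.+1 == i :> nat); rewrite ?mulr1 ?mulr0.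
Qed.

Lemma conj_C_above (i j : 'I_d.+1) : (i < j)%N ->
  N i j * phi j = if j == i.+1 :> nat then phi'' (d - i)%N else 0.
Proof.
move=> ij; have jd := ltn_ord j; have id : (i < d)%N by lia.
have j1_lt : (j.-1 < d.+1)%N by lia.
have := coord_span_sel p_unit (CA_basis_mod_span_lt id) (k := Ordinal j1_lt).
have ij1 : (i <= j.-1)%N by lia.
rewrite /= -leqNgt => /(_ ij1).
have E : p i *m C *m A *m invmx P = p i *m C *m invmx P *m lower_mx d phi.
  by rewrite -(mulmxK p_unit (lower_mx d phi)) -(basis_mx_lowering pA) !mulmxA mulmxKV.
rewrite mulmxBl -scalemxAl E coord_basis // conj_entry mxE.
rewrite (@row_mul_lower_mx _ _ _ _ _ j); last by rewrite /=; lia.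
rewrite [X in _ + X = 0]mxE [X in - X]mxE mxE => /eqP; rewrite subr_eq0 => /eqP ->.
rewrite mxE eqxx /=.
have -> : (Ordinal j1_lt == i) = (j == i.+1 :> nat) by rewrite -val_eqE /=; apply/eqP/eqP; lia.
by case: (j == i.+1 :> nat); rewrite ?mulr1 ?mulr0.
Qed.

Lemma basis_mx_tridiag (a : nat -> F) : (forall i : 'I_d.+1, N i i = a i) ->
  P *m C = tridiag_normal_mx d phi phi' phi'' a *m P.
Proof.
move=> N_diag; suff -> : tridiag_normal_mx d phi phi' phi'' a = N by rewrite mulmxKV.
apply/matrixP=> i j; rewrite mxE; have jd := ltn_ord j.
case: (ltngtP i j) => [ij|ji|ij].
- have phi_j : phi j != 0 by apply: phi_neq0; lia.
  have -> : (j.+1 == i :> nat) = false by apply/eqP; lia.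
  apply: (mulIf phi_j); rewrite conj_C_above //.
  by case: ifP => _; rewrite ?divfK ?mul0r.
- rewrite conj_C_below //; case: ifP => // _.
  by have -> : (j == i.+1 :> nat) = false by apply/eqP; lia.
- have {ij} -> : i = j by apply: val_inj.
  by rewrite N_diag ifF //; apply/eqP; lia.
Qed.

End NormalForm.

Lemma triple_data_normal_form (F : fieldType) (d : nat) (A B C : 'M[F]_(d.+1))
    (phi phi' phi'' a a' a'' : nat -> F) :
  triple_data A B C phi phi' phi'' a a' a'' ->
  exists2 P : 'M[F]_(d.+1), P \in unitmx &
    [/\ P *m A = lower_mx d phi *m P, P *m B = raise_mx F d *m P
      & P *m C = tridiag_normal_mx d phi phi' phi'' a *m P].
Proof.
case=> /pair_data_basis [p [p_unit pB pA phi_neq0 p_trace]]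
       /pair_data_basis [q [q_unit qC qB phi'_neq0 _]]
       /pair_data_basis [r [r_unit rA rC _ _]].
exists (basis_mx p) => //; split; [exact: basis_mx_lowering | exact: basis_mx_raising |].
exact: (basis_mx_tridiag p_unit q_unit r_unit pA pB qB qC rC rA phi_neq0 phi'_neq0 p_trace).
Qed.

Lemma conj_common_form (F : fieldType) (n : nat) (P P' X X' M : 'M[F]_n) :
  P \in unitmx -> P *m X = M *m P -> P' *m X' = M *m P' ->
  X *m (invmx P *m P') = invmx P *m P' *m X'.
Proof.
move=> P_unit PX PX'; have -> : X = invmx P *m (M *m P) by rewrite -PX mulKmx.
by rewrite -mulmxA PX' !mulmxA mulmxK.
Qed.

Theorem proposition13p41 (F : fieldType) (d : nat)
  (A B C A' B' C' : 'M[F]_(d.+1)) (phi phi' phi'' a a' a'' : nat -> F) :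
  LR_triple A B C -> LR_triple A' B' C' ->
  triple_data A B C phi phi' phi'' a a' a'' ->
  triple_data A' B' C' phi phi' phi'' a a' a'' ->
  LR_iso A B C A' B' C'.
Proof.
move=> _ _ /triple_data_normal_form [P P_unit [PA PB PC]]
            /triple_data_normal_form [P' P'_unit [PA' PB' PC']].
exists (invmx P *m P'); first by rewrite unitmx_mul unitmx_inv P_unit P'_unit.
by split; [exact: conj_common_form P_unit PA PA' | exact: conj_common_form P_unit PB PB' |
  exact: conj_common_form P_unit PC PC'].
Qed.
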